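(* Let $X$ be a second-countable Hausdorff topological space and $T:X\to X$ a continuous map. The following are equivalent: (i) $T$ is topologically quasi-rigid; (ii) for every $N\in\mathbb{N}$, the $N$-fold direct product $T_{(N)}:X^N\to X^N$ is topologically recurrent.
   Context: A dynamical system $(X,T)$ is a continuous self-map $T$ of a Hausdorff topological space $X$. For $N\in\mathbb{N}$, $T_{(N)}:X^N\to X^N$ is $T_{(N)}(x_1,\dots,x_N)=(Tx_1,\dots,Tx_N)$. A map $T$ is topologically recurrent if for every non-empty open $U\subset X$ there is $n\in\mathbb{N}$ with $T^n(U)\cap U\neq\varnothing$. $T$ is topologically quasi-rigid with respect to a strictly increasing sequence $(n_k)_{k\in\mathbb{N}}$ of positive integers if for every non-empty open $U\subset X$ there is $k_U$ with $T^{n_k}(U)\cap U\neq\varnothing$ for all $k\geq k_U$; $T$ is topologically quasi-rigid if it is so with respect to some such sequence. *)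

From HB Require Import structures.
From mathcomp Require Import all_boot all_order all_algebra.
From mathcomp Require Import all_classical all_reals topology.
Set Implicit Arguments. Unset Strict Implicit. Unset Printing Implicit Defensive.
Import Order.TTheory GRing.Theory Num.Theory.
Local Open Scope classical_set_scope.

Definition top_recurrent (Y : topologicalType) (S : Y -> Y) : Prop :=
  forall U : set Y, open U -> U !=set0 ->
    exists n : nat, (0 < n)%N /\ (iter n S @` U `&` U) !=set0.

Definition top_quasi_rigid_wrt (Y : topologicalType) (S : Y -> Y) (nk : nat -> nat) : Prop :=
  forall U : set Y, open U -> U !=set0 ->
    exists kU : nat, forall k : nat, (kU <= k)%N -> (iter (nk k) S @` U `&` U) !=set0.

Definition top_quasi_rigid (Y : topologicalType) (S : Y -> Y) : Prop :=
  exists nk : nat -> nat,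
    [/\ (0 < nk 0)%N, (forall k, (nk k < nk k.+1)%N) & top_quasi_rigid_wrt S nk].

Definition prod_map (X : topologicalType) (T : X -> X) (N : nat) :
  {ptws 'I_N -> X} -> {ptws 'I_N -> X} := fun x i => T (x i).

From HB Require Import structures.
From mathcomp Require Import all_boot all_order all_algebra.
From mathcomp Require Import all_classical all_reals topology.

(* (i) -> (ii): a nonempty open subset of X^N contains a box of N nonempty open
   sets, and quasi-rigidity gives all N sides a common tail of return times.
   (ii) -> (i): recurrence of T_(N) on boxes gives finitely many nonempty open
   sets a common return time n; shrinking each U_j to U_j /\ T^-n U_j and
   recurring again gives a larger one, so common return times are unbounded.
   Second countability provides a sequence G_j of nonempty open sets, one inside
   every nonempty open set, and a diagonal choice of common return times of
   G_0, ..., G_k, increasing in k, is a rigidity sequence. *)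

Set Implicit Arguments.
Unset Strict Implicit.
Unset Printing Implicit Defensive.
Local Open Scope classical_set_scope.

Definition box (I : Type) (X : topologicalType) (U : I -> set X) :
  set {ptws I -> X} := [set y | forall i, U i (y i)].

Lemma open_box (I : finType) (X : topologicalType) (U : I -> set X) :
  (forall i, open (U i)) -> open (box U).
Proof.
move=> oU; rewrite openE => p Up.
have := @filter_forall _ I (fun i (y : {ptws I -> X}) => U i (y i)) (nbhs p).
apply=> i.
exact/(@proj_continuous _ (fun=> X) i p)/open_nbhs_nbhs.
Qed.

Lemma nbhs_ptws_box (I : eqType) (X : topologicalType)
    (p : {ptws I -> X}) (W : set {ptws I -> X}) :
  nbhs p W -> exists U : I -> set X,
    (forall i, open (U i) /\ U i (p i)) /\ box U `<=` W.
Proof.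
pose F := filter_from [set U | forall i, nbhs (p i) (U i)] (@box I X).
have FF : Filter F.
  apply: filter_from_filter; first by exists (fun=> setT) => i; exact: filterT.
  move=> U V nU nV; exists (fun i => U i `&` V i).
    by move=> i; exact: filterI.
  by move=> y UVy; split=> i; case: (UVy i).
suff Fp : F --> p.
  move=> /Fp [U nU UW]; exists (fun i => interior (U i)); split.
    move=> i; split; first exact: open_interior.
    exact: nbhs_singleton (nbhs_interior (nU i)).
  by move=> y Uy; apply: UW => i; exact: interior_subset (Uy i).
apply/(@cvg_sup _ _ (fun i => Topological.class
  (initial_topology (fun y : I -> X => y i))) F p FF) => i.
apply/(@cvg_image _ X (fun y : I -> X => y i) F p FF).
  rewrite eqEsubset; split=> [y //|y _].
  by exists (fun j => if j == i then y else p j); rewrite /= ?eqxx.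
move=> A /= nA; pose U j := if j == i then A else setT.
exists (box U).
  by exists U => // j; rewrite /U; case: eqP => [->|_]; [|exact: filterT].
rewrite eqEsubset; split=> y.
  by case=> z Uz <-; have := Uz i; rewrite /U eqxx.
move=> Ay; exists (fun j => if j == i then y else p j); last by rewrite /= eqxx.
by move=> j; rewrite /U; case: eqP.
Qed.

Lemma continuous_iter (X : topologicalType) (T : X -> X) n :
  continuous T -> continuous (iter n T).
Proof.
move=> hT; elim: n => [|n IH] x; first exact: cvg_id.
exact: continuous_comp (IH x) (hT _).
Qed.

Section Returns.
Variables (Y : Type) (S : Y -> Y).

Definition return_time (U : set Y) (n : nat) : Prop :=
  (iter n S @` U `&` U) !=set0.

Lemma return_timeP U n :
  return_time U n <-> exists2 y, U y & U (iter n S y).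
Proof.
split; first by case=> _ [[y Uy <-] Uny]; exists y.
by case=> y Uy Uny; exists (iter n S y); split; first exists y.
Qed.

Lemma return_time_sub U V n : U `<=` V -> return_time U n -> return_time V n.
Proof.
by move=> UV /return_timeP [y /UV Vy /UV Vny]; apply/return_timeP; exists y.
Qed.

Lemma return_time_add U n m :
  return_time (U `&` iter n S @^-1` U) m -> return_time U (n + m).
Proof.
case/return_timeP=> y [Uy _] [_ Unmy].
by apply/return_timeP; exists y; rewrite // iterD.
Qed.

Lemma return_time_preimage U n :
  return_time U n -> (U `&` iter n S @^-1` U) !=set0.
Proof. by case/return_timeP=> y Uy Uny; exists y. Qed.

End Returns.

Section ProductMap.
Variables (X : topologicalType) (T : X -> X) (N : nat).

Lemma iter_prod_map n (x : {ptws 'I_N -> X}) :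
  iter n (prod_map T (N:=N)) x = (fun i => iter n T (x i)).
Proof. by elim: n => //= n ->. Qed.

Lemma return_time_box (U : 'I_N -> set X) n :
  return_time (prod_map T (N:=N)) (box U) n <-> forall i, return_time T (U i) n.
Proof.
split.
  case/return_timeP=> y Uy; rewrite iter_prod_map => Uny i.
  by apply/return_timeP; exists (y i).
move=> hU; have /choice [y yU] : forall i, exists y, U i y /\ U i (iter n T y).
  by move=> i; have /return_timeP [y] := hU i; exists y.
apply/return_timeP; exists (y : {ptws 'I_N -> X}); rewrite ?iter_prod_map => i;
  by case: (yU i).
Qed.

End ProductMap.

Lemma increasing_seq_of_unbounded (P : nat -> nat -> Prop) :
  (forall k M, exists2 n, (M < n)%N & P k n) ->
  exists nk : nat -> nat,
    [/\ (0 < nk 0)%N, (forall k, (nk k < nk k.+1)%N) & forall k, P k (nk k)].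
Proof.
move=> hP; have /choice [g hg] :
    forall kM : nat * nat, exists n, (kM.2 < n)%N /\ P kM.1 n.
  by case=> k M; have [n] := hP k M; exists n.
pose fix nk k := if k is k'.+1 then g (k, nk k') else g (0, 0)%N.
exists nk; split=> [|k|[|k]]; first exact: (hg (0, 0)%N).1.
- exact: (hg (k.+1, nk k)).1.
- exact: (hg (0, 0)%N).2.
- exact: (hg (k.+1, nk k)).2.
Qed.

Lemma second_countable_open_seq (X : topologicalType) (x0 : X) :
  @second_countable X -> exists G : nat -> set X,
    (forall j, open (G j) /\ G j !=set0) /\
    forall U, open U -> U !=set0 -> exists j, G j `<=` U.
Proof.
move=> [B cB [oB nbhsB]]; have [f finj] := countable_injP _ cB.
have /choice [G hG] : forall j, exists G : set X, [/\ open G, G !=set0 &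
    forall b, B b -> b !=set0 -> f b = j -> G = b].
  move=> j; have [[b [Bb b0 fb]]|nob] :=
      pselect (exists b, [/\ B b, b !=set0 & f b = j]).
    exists b; split=> [|//|b' Bb' _ fb']; first exact: oB.
    by apply: finj; rewrite ?inE //; congruence.
  exists setT; split=> [|//|b Bb b0 fb]; [exact: openT | by exists x0 |].
  by exfalso; apply: nob; exists b.
exists G; split=> [j|U oU [x Ux]]; first by have [] := hG j.
have [b [Bb bx] bU] := nbhsB x U (open_nbhs_nbhs (conj oU Ux)).
have [_ _ Gb] := hG (f b).
by exists (f b); rewrite (Gb b) //; exists x.
Qed.

Section Recurrence.
Variables (X : topologicalType) (T : X -> X).

Definition nonempty_opens (k : nat) (U : nat -> set X) : Prop :=
  forall j, (j <= k)%N -> open (U j) /\ U j !=set0.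

Definition common_return (k : nat) (U : nat -> set X) (n : nat) : Prop :=
  forall j, (j <= k)%N -> return_time T (U j) n.

Lemma quasi_rigid_prod_recurrent N :
  top_quasi_rigid T -> top_recurrent (prod_map T (N:=N)).
Proof.
move=> [nk [nk0 nkS qr]] W oW [x Wx].
have [V [Vx VW]] := nbhs_ptws_box (open_nbhs_nbhs (conj oW Wx)).
have /choice [k hk] : forall i, exists kU, forall k, (kU <= k)%N ->
    return_time T (V i) (nk k).
  by move=> i; have [oV Vxi] := Vx i; apply: qr => //; exists (x i).
pose K := (\max_i k i)%N.
have nk_ge0 m : (nk 0 <= nk m)%N.
  by elim: m => // m IH; exact: leq_trans IH (ltnW (nkS m)).
exists (nk K); split; first exact: leq_trans nk0 (nk_ge0 K).
apply: return_time_sub VW _; apply/return_time_box => i.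
exact/hk/leq_bigmax.
Qed.

Lemma prod_recurrent_common_return :
  (forall N, (0 < N)%N -> top_recurrent (prod_map T (N:=N))) ->
  forall k U, nonempty_opens k U -> exists2 n, (0 < n)%N & common_return k U n.
Proof.
move=> hrec k U hU.
have oU : forall i : 'I_k.+1, open (U i).
  by move=> i; exact: (hU i (ltn_ord i)).1.
have [|n [n0 /return_time_box Un]] := hrec k.+1 isT _ (open_box oU).
  have /choice [x Ux] : forall i : 'I_k.+1, exists x, U i x.
    by move=> i; exact: (hU i (ltn_ord i)).2.
  by exists (x : {ptws 'I_k.+1 -> X}).
by exists n => // j jk; exact: (Un (Ordinal (jk : (j < k.+1)%N))).
Qed.

Lemma common_return_unbounded : continuous T ->
  (forall k U, nonempty_opens k U ->
    exists2 n, (0 < n)%N & common_return k U n) ->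
  forall M k U, nonempty_opens k U ->
    exists2 n, (M < n)%N & common_return k U n.
Proof.
move=> hT hcom; elim=> [|M IH] k U hU; first exact: hcom.
have [n Mn Un] := IH k U hU.
pose V j := U j `&` iter n T @^-1` U j.
have [|m m0 Vm] := hcom k V.
  move=> j jk; have [oU _] := hU j jk.
  split; last exact: return_time_preimage (Un j jk).
  by apply: openI => //; apply: open_comp => // y _; exact: continuous_iter.
exists (n + m); first by rewrite -addn1 leq_add.
by move=> j jk; exact: return_time_add (Vm j jk).
Qed.

Lemma prod_recurrent_quasi_rigid : @second_countable X -> continuous T ->
  (forall N, (0 < N)%N -> top_recurrent (prod_map T (N:=N))) ->
  top_quasi_rigid T.
Proof.
move=> hsc hT hrec.
have [[x0 _]|X0] := pselect (exists x : X, True); last first.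
  by exists succn; split=> // U _ [x _]; exfalso; apply: X0; exists x.
have [G [oG GU]] := second_countable_open_seq x0 hsc.
have [|nk [nk0 nkS Gnk]] := @increasing_seq_of_unbounded (common_return^~ G).
  move=> k M; apply: common_return_unbounded hT _ _ _ _ _.
  - exact: prod_recurrent_common_return hrec.
  - by move=> j _; exact: oG.
exists nk; split=> // U oU U0; have [j GjU] := GU U oU U0.
by exists j => k jk; exact: return_time_sub GjU (Gnk k j jk).
Qed.

End Recurrence.

Theorem mainTheorem1 (X : topologicalType) (T : X -> X)
  (hsc : @second_countable X) (hT2 : @hausdorff_space X) (hT : continuous T) :
  top_quasi_rigid T <->
  (forall N : nat, (0 < N)%N -> top_recurrent (@prod_map X T N)).
Proof.
split=> [qr N _|]; first exact: quasi_rigid_prod_recurrent.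
exact: prod_recurrent_quasi_rigid.
Qed.
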